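(* Let $p$ be an odd prime, $q$ a power of $p$, $R=\mathbb{F}_q[t]$, $K=\mathbb{F}_q(t)$, $K^{\rm sep}$ a separable closure of $K$, and $\mathcal{O}_{K^{\rm sep}}$ the integral closure of $R$ in $K^{\rm sep}$. Let $S$ be any subring of $\mathcal{O}_{K^{\rm sep}}$ containing $R$. Then: (a) for every finite set $A\subseteq S$ there exists $x\in S$, neither zero nor a unit of $S$, such that $(x)+(a_i)=S$ for every $a_i\in A\setminus\{0\}$; (b) for every finite set $A\subseteq S$ with $0\notin A$ and every $a\in S$ that is neither zero nor a unit, there exists $g\in S$ such that: for every $a_i\in A$, $1+a_ig$ is neither zero nor a unit; for every $a_i\in A$, $(a)+(1+a_ig)=S$; and for distinct $a_i,a_j\in A$, $(1+a_ig)+(1+a_jg)=S$. (All ideals are ideals of $S$.) *)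

From HB Require Import structures.
From mathcomp Require Import all_boot all_order all_algebra all_field.
From mathcomp Require Import fraction.
Set Implicit Arguments. Unset Strict Implicit. Unset Printing Implicit Defensive.
Import Order.TTheory GRing.Theory Num.Theory.
Local Open Scope ring_scope.

(* R = F[t] with F = F_q, K = {fraction {poly F}} = F_q(t).
   L together with the field embedding iota : K -> L plays the role of K^sep. *)

Definition sep_alg_over (K L : fieldType) (iota : {rmorphism K -> L}) (x : L) :=
  exists2 P : {poly K}, (P != 0) && separable_poly P & root (map_poly iota P) x.

Definition is_sep_closure (K L : fieldType) (iota : {rmorphism K -> L}) :=
  (forall x : L, sep_alg_over iota x) /\
  (forall P : {poly K}, separable_poly P -> (1 < size P)%N ->
     exists x : L, root (map_poly iota P) x).

Definition integral_over_polyF (F : fieldType) (L : fieldType)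
  (iota : {rmorphism {fraction {poly F}} -> L}) (x : L) :=
  exists2 P : {poly {poly F}}, P \is monic &
    root (map_poly (fun r : {poly F} => iota (@FracField.tofrac _ r)) P) x.

Definition unit_in (L : fieldType) (S : {pred L}) (x : L) :=
  exists2 y, y \in S & x * y = 1.

(* (x) + (y) = S, as ideals of the subring S *)
Definition comax_in (L : fieldType) (S : {pred L}) (x y : L) :=
  exists u v, [/\ u \in S, v \in S & u * x + v * y = 1].

From HB Require Import structures.
From mathcomp Require Import all_boot all_order all_algebra all_field.
From mathcomp Require Import fraction.
From mathcomp Require Import ring.
Import Order.TTheory GRing.Theory Num.Theory.
Set Implicit Arguments. Unset Strict Implicit. Unset Printing Implicit Defensive.
Local Open Scope ring_scope.

(* Every nonzero b of S divides in S a nonzero element of R = F[t] (the lowest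
   nonzero coefficient of an integral equation of b), and an element of R of
   positive degree is not a unit of S, since S is integral over R and units of
   F[t] are constants.  Hence every element of S that is congruent to 1 modulo
   a multiple N b of b, N in R, is comaximal with b; taking N t + 1 gives (a).
   For (b) one builds g divisible by a and by all differences ai - aj (so the
   comaximality conditions hold by the same congruence trick) and such that
   every 1 + ai g has a factor of positive degree in R; the latter is achieved
   one ai at a time, each step preserving the previously obtained factors. *)

Definition dvd_in (L : fieldType) (S : {pred L}) (x y : L) :=
  exists2 e, e \in S & y = x * e.

Section Subring.

Variables (L : fieldType) (S : {pred L}) (Ssub : subring_closed S).
HB.instance Definition _ := GRing.isSubringClosed.Build L S Ssub.

Lemma dvd_in_mulr x y z : dvd_in S x y -> z \in S -> dvd_in S x (y * z).
Proof. by case=> e eS ->; exists (e * z); rewrite ?rpredM ?mulrA. Qed.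

Lemma dvd_in_trans x y z : dvd_in S x y -> dvd_in S y z -> dvd_in S x z.
Proof. by case=> e eS -> [e' e'S ->]; exists (e * e'); rewrite ?rpredM ?mulrA. Qed.

Lemma dvd_in_prod (T : eqType) (s : seq T) (P : pred T) (f : T -> L) x :
  {in s, forall y, f y \in S} -> x \in s -> P x ->
  dvd_in S (f x) (\prod_(y <- s | P y) f y).
Proof.
move=> fS xs Px; rewrite (big_rem x) // Px.
exists (\prod_(y <- rem x s | P y) f y) => //.
by rewrite big_seq_cond rpred_prod // => y /andP[/mem_rem/fS].
Qed.

Lemma unit_in_dvd x y : dvd_in S x y -> unit_in S y -> unit_in S x.
Proof. by case=> e eS -> [z zS exz1]; exists (e * z); rewrite ?rpredM ?mulrA. Qed.

Lemma unit_in_of_add1_mul_eq0 b w : w \in S -> 1 + b * w = 0 -> unit_in S b.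
Proof.
by move=> wS bw0; exists (- w); rewrite ?rpredN // mulrN -[- _]add0r -bw0 addrK.
Qed.

Lemma comax_inC x y : comax_in S x y -> comax_in S y x.
Proof. by case=> u [v [uS vS uv1]]; exists v, u; split; rewrite // addrC. Qed.

Lemma comax_in_add1 b w : w \in S -> comax_in S b (1 + b * w).
Proof. by move=> wS; exists (- w), 1; split; rewrite ?rpredN ?rpred1 //; ring. Qed.

(* With g = (ai - aj) m the Bezout relation is
   (1 + ai aj m) (1 + ai g) - ai^2 m (1 + aj g) = 1. *)
Lemma comax_in_add1_sub ai aj g : ai \in S -> aj \in S -> dvd_in S (ai - aj) g ->
  comax_in S (1 + ai * g) (1 + aj * g).
Proof.
move=> aiS ajS [m mS ->]; exists (1 + ai * aj * m), (- (ai * ai * m)).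
by split; rewrite ?rpredD ?rpredN ?rpred1 ?rpredM //; ring.
Qed.

Section ImageNorm.

Variables (R : nzRingType) (phi : {rmorphism R -> L}).
Hypothesis phiS : forall r, phi r \in S.

Lemma horner_map_in (P : {poly R}) b : b \in S -> (map_poly phi P).[b] \in S.
Proof.
move=> bS; rewrite horner_coef rpred_sum // => i _.
by rewrite coef_map rpredM ?rpredX ?phiS.
Qed.

(* Strip the factors 'X of P and read off the constant term:
   0 = c + b Q.[b] with c != 0. *)
Lemma dvd_in_image_of_root (P : {poly R}) b : P != 0 -> b \in S -> b != 0 ->
  root (map_poly phi P) b -> exists2 r, r != 0 & dvd_in S b (phi r).
Proof.
elim/poly_ind: P => [|Q c IH]; first by rewrite eqxx.
move=> PQc0 bS b0; rewrite /root rmorphD rmorphM /= map_polyX map_polyC !hornerE.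
have [c0 | c0] := eqVneq c 0.
  rewrite c0 raddf0 addr0 mulf_eq0 (negbTE b0) orbF => rootQ.
  apply: IH rootQ => //; apply: contra PQc0 => /eqP->.
  by rewrite mul0r add0r c0.
move=> /eqP Pb0; exists c => //; exists (- (map_poly phi Q).[b]).
  by rewrite rpredN; apply: horner_map_in.
by apply/eqP; rewrite mulrN mulrC -addr_eq0 addrC Pb0.
Qed.

End ImageNorm.

Section OverPolynomials.

Variables (F : fieldType) (phi : {rmorphism {poly F} -> L}).
Hypotheses (phi_inj : injective phi) (phiS : forall r, phi r \in S).
Hypothesis S_integral : forall y, y \in S ->
  exists2 P : {poly {poly F}}, P \is monic & root (map_poly phi P) y.

Lemma dvd_in_image b : b \in S -> b != 0 -> exists2 r, r != 0 & dvd_in S b (phi r).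
Proof.
move=> bS b0; have [P Pmonic Pb0] := S_integral bS.
exact: (dvd_in_image_of_root phiS (monic_neq0 Pmonic) bS b0 Pb0).
Qed.

(* If phi x * y = 1 and y is a root of the monic P of degree n, multiplying
   P(y) = 0 by phi x ^ n gives 1 + x * (...) = 0 in F[t]. *)
Lemma unit_in_image_dvdp1 (x : {poly F}) : unit_in S (phi x) -> x %| 1.
Proof.
case=> y yS xy1; have [P Pmonic Py0] := S_integral yS.
have P0 : P != 0 by apply: monic_neq0.
set n := (size P).-1; have sizeP : size P = n.+1 by rewrite /n prednK ?size_poly_gt0.
have sum0 : \sum_(i < n.+1) P`_i * x ^+ (n - i) = 0.
  apply: phi_inj; rewrite rmorph0 rmorph_sum /=.
  have sizePphi : (size (map_poly phi P) <= n.+1)%N.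
    by rewrite size_map_poly_id0 ?sizeP // (monicP Pmonic) rmorph1 oner_neq0.
  transitivity ((map_poly phi P).[y] * phi x ^+ n); last by rewrite (rootP Py0) mul0r.
  rewrite (horner_coef_wide y sizePphi) mulr_suml; apply: eq_bigr => i _.
  rewrite coef_map rmorphM rmorphXn -mulrA; congr (_ * _).
  have -> : phi x ^+ n = phi x ^+ (n - i) * phi x ^+ i by rewrite -exprD subnK // -ltnS.
  by rewrite mulrCA -exprMn [y * _]mulrC xy1 expr1n mulr1.
move: sum0; rewrite big_ord_recr /= subnn expr0 mulr1.
have -> : P`_n = 1 by move/monicP: Pmonic; rewrite /lead_coef sizeP.
move/eqP; rewrite addr_eq0 => /eqP sum_eq; rewrite -dvdpNr -sum_eq.
apply: (big_ind (fun q => x %| q)) => // [q r|i _]; first exact: dvdp_add.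
by apply/dvdp_mull/dvdp_exp; rewrite ?subn_gt0.
Qed.

Lemma image_nonunit (x : {poly F}) : (1 < size x)%N -> ~ unit_in S (phi x).
Proof.
by move=> sizex /unit_in_image_dvdp1; rewrite dvdp1 => /eqP sizex1; rewrite sizex1 in sizex.
Qed.

Lemma size_mulX_add1 (Q : {poly F}) : Q != 0 -> (1 < size (Q * 'X + 1)%R)%N.
Proof. by move=> Q0; rewrite size_polyDl size_mulX // ?size_poly1 ltnS ?size_poly_gt0. Qed.

Lemma exists_nonunit_comax (A : seq L) : {subset A <= S} ->
  exists x, [/\ x \in S, x != 0, ~ unit_in S x &
    forall ai, ai \in A -> ai != 0 -> comax_in S x ai].
Proof.
move=> AS; pose N := \prod_(y <- A | y != 0) y.
have NS : N \in S by rewrite /N big_seq_cond rpred_prod // => y /andP[/AS].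
have N0 : N != 0 by rewrite prodf_seq_neq0; apply/allP => y _; apply/implyP.
have [r r0 N_r] := dvd_in_image NS N0.
have sizex := size_mulX_add1 r0.
exists (phi (r * 'X + 1)); split => //.
- by rewrite raddf_eq0 // -size_poly_gt0 (ltn_trans _ sizex).
- exact: image_nonunit.
move=> ai aiA ai0; apply: comax_inC; rewrite rmorphD rmorphM rmorph1 addrC.
have ai_N : dvd_in S ai N by apply: (dvd_in_prod (f := fun y => y)) => // y /AS.
have [w wS ->] := dvd_in_mulr (dvd_in_trans ai_N N_r) (phiS 'X).
exact: comax_in_add1.
Qed.

(* Induction on A: for the head a0 with a0 | phi q, the choice
   g0 = (1 + a0 c) t e gives 1 + a0 (c + M g0) = (1 + a0 c) (M q t + 1); all
   later corrections are multiples of M (M q t + 1), which keeps this factor. *)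
Lemma exists_shift_nonconst_factors (A : seq L) : {subset A <= S} -> 0 \notin A ->
  forall c M, c \in S -> M != 0 ->
  exists2 k, k \in S & forall ai, ai \in A ->
    exists2 x : {poly F}, (1 < size x)%N & dvd_in S (phi x) (1 + ai * (c + phi M * k)).
Proof.
elim: A => [|a0 A IH] AS A0 c M cS M0; first by exists 0; rewrite ?rpred0.
have a0S : a0 \in S by apply: AS; rewrite mem_head.
have a00 : a0 != 0 by apply: contraNneq A0 => <-; rewrite mem_head.
have [q q0 [e eS qe]] := dvd_in_image a0S a00.
pose x0 := M * q * 'X + 1; have sizex0 := size_mulX_add1 (mulf_neq0 M0 q0).
have x00 : x0 != 0 by rewrite -size_poly_gt0 (ltn_trans _ sizex0).
pose g0 := (1 + a0 * c) * phi 'X * e.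
have g0S : g0 \in S by rewrite !(rpredD, rpredM, rpred1) ?phiS.
have AS' : {subset A <= S} by move=> y yA; apply: AS; rewrite inE yA orbT.
have A0' : 0 \notin A by apply: contra A0 => A0; rewrite inE A0 orbT.
have c'S : c + phi M * g0 \in S by apply: rpredD cS (rpredM (phiS M) g0S).
have [k' k'S Hk'] := IH AS' A0' _ _ c'S (mulf_neq0 M0 x00).
have shift : c + phi M * (g0 + phi x0 * k') = c + phi M * g0 + phi (M * x0) * k'.
  by rewrite rmorphM; ring.
exists (g0 + phi x0 * k'); first exact: rpredD g0S (rpredM (phiS _) k'S).
move=> ai; rewrite inE shift => /predU1P[-> | aiA]; last exact: Hk'.
exists x0 => //; exists (1 + a0 * c + a0 * phi M * k').
  by rewrite !(rpredD, rpredM, rpred1) ?phiS.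
by rewrite /g0 /x0 !(rmorphM, rmorphD, rmorph1) qe; ring.
Qed.

Lemma exists_comax_translates (A : seq L) a :
  {subset A <= S} -> 0 \notin A -> a \in S -> a != 0 -> ~ unit_in S a ->
  exists2 g, g \in S &
    [/\ forall ai, ai \in A -> 1 + ai * g != 0 /\ ~ unit_in S (1 + ai * g),
        forall ai, ai \in A -> comax_in S a (1 + ai * g) &
        forall ai aj, ai \in A -> aj \in A -> ai != aj ->
          comax_in S (1 + ai * g) (1 + aj * g)].
Proof.
move=> AS A0 aS a0 a_nonunit.
pose diffs y := \prod_(z <- A | y != z) (y - z).
pose D := \prod_(y <- A) diffs y.
have diffsS : {in A, forall y, diffs y \in S}.
  move=> y yA; rewrite /diffs big_seq_cond rpred_prod // => z /andP[/AS zS _].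
  exact: rpredB (AS _ yA) zS.
have DS : D \in S by rewrite /D big_seq rpred_prod.
have D0 : D != 0.
  rewrite /D prodf_seq_neq0; apply/allP => y _; rewrite /diffs prodf_seq_neq0.
  by apply/allP => z _; apply/implyP; rewrite subr_eq0.
have [ra ra0 a_ra] := dvd_in_image aS a0.
have [rD rD0 D_rD] := dvd_in_image DS D0.
have [k kS Hk] := exists_shift_nonconst_factors AS A0 (rpred0 _) (mulf_neq0 ra0 rD0).
pose g := phi (ra * rD) * k.
have a_g : dvd_in S a g.
  by rewrite /g rmorphM -mulrA; apply: dvd_in_mulr a_ra (rpredM (phiS _) kS).
have diff_g ai aj : ai \in A -> aj \in A -> ai != aj -> dvd_in S (ai - aj) g.
  move=> aiA ajA aij; apply: (dvd_in_trans (y := diffs ai)).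
    rewrite /diffs; apply: (dvd_in_prod (f := fun z => ai - z)) => // z /AS zS.
    exact: rpredB (AS _ aiA) zS.
  apply: (dvd_in_trans (y := D)); first by rewrite /D; apply: (dvd_in_prod (f := diffs)).
  apply: (dvd_in_trans D_rD); exists (phi ra * k); first exact: rpredM (phiS _) kS.
  by rewrite /g rmorphM mulrCA mulrA.
exists g; first exact: rpredM (phiS _) kS.
have [e eS ge] := a_g.
split=> [ai aiA | ai aiA | ai aj aiA ajA aij].
- have [x sizex x_dvd] := Hk ai aiA; rewrite add0r in x_dvd; split.
    by apply/eqP; rewrite ge mulrCA => /(unit_in_of_add1_mul_eq0 (rpredM (AS _ aiA) eS)).
  by move/(unit_in_dvd x_dvd); apply: image_nonunit.
- by rewrite ge mulrCA; apply/comax_in_add1/(rpredM (AS _ aiA) eS).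
- exact: comax_in_add1_sub (AS _ aiA) (AS _ ajA) (diff_g _ _ aiA ajA aij).
Qed.

End OverPolynomials.

End Subring.

Theorem lemma2p17 (F : finFieldType) (p : nat)
  (p_prime : prime p) (p_odd : odd p) (charF : p \in [pchar F])
  (L : fieldType) (iota : {rmorphism {fraction {poly F}} -> L})
  (Lsep : is_sep_closure iota)
  (S : {pred L}) (Ssub : subring_closed S)
  (RS : forall r : {poly F}, iota (@FracField.tofrac _ r) \in S)
  (SO : forall x, x \in S -> integral_over_polyF iota x) :
  (forall A : seq L, {subset A <= S} ->
     exists x, [/\ x \in S, x != 0, ~ unit_in S x &
       forall ai, ai \in A -> ai != 0 -> comax_in S x ai])
  /\
  (forall (A : seq L) (a : L), {subset A <= S} -> 0 \notin A ->
     a \in S -> a != 0 -> ~ unit_in S a ->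
     exists2 g, g \in S &
       [/\ forall ai, ai \in A -> 1 + ai * g != 0 /\ ~ unit_in S (1 + ai * g),
           forall ai, ai \in A -> comax_in S a (1 + ai * g) &
           forall ai aj, ai \in A -> aj \in A -> ai != aj ->
             comax_in S (1 + ai * g) (1 + aj * g)]).
Proof.
pose phi : {rmorphism {poly F} -> L} := iota \o (@FracField.tofrac _).
have phi_inj : injective phi by move=> u v /fmorph_inj /eqP; rewrite tofrac_eq => /eqP.
split.
- exact: (exists_nonunit_comax Ssub phi_inj RS SO).
- exact: (exists_comax_translates Ssub phi_inj RS SO).
Qed.
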